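(* For every $r\ge0$, every graph $G\in\mathcal{G}_{\Sigma,\Delta,\pi}$ and every $v\in V(G)$, we have $\omega_r(G^r_v)=\omega(G)^r_v$.
   Context: Fix an uncountably infinite set $\mathcal{V}$, sets $\Sigma,\Delta$, finite $\pi$. A graph $G$: countable $V(G)\subset\mathcal{V}$; a set $E(G)$ of pairwise disjoint two-element subsets of $V(G)\times\pi$ (write $u\!:\!i$ for $(u,i)$); partial labelings $\sigma(G):V(G)\rightharpoonup\Sigma$, $\delta(G):E(G)\rightharpoonup\Delta$; $\mathcal{G}_{\Sigma,\Delta,\pi}$ the set of graphs. $d_G$ shortest-path distance, $B_G(c,r)$ ball. Disk $G^r_c=(H,c)$: $V(H)=B_G(c,r+1)$, $E(H)$ the edges of $G$ with an endpoint in $B_G(c,r)$, $\sigma(H)=\sigma(G)|_{B_G(c,r)}$, $\delta(H)=\delta(G)|_{E(H)}$; $\mathcal{D}^r_{\Sigma,\Delta,\pi}$ the set of radius-$r$ disks. Let $\Sigma'=\Sigma\uplus\{\star\}$, $\Delta'=\Delta\uplus\{\star\}$, $\pi'=\pi\times\{0,1\}$. The encoding $\omega:\mathcal{G}_{\Sigma,\Delta,\pi}\to\mathcal{G}_{\Sigma',\Delta',\pi'}$: $V(\omega(G))=V(G)$; $\sigma(\omega(G))(u)=\sigma(G)(u)$ if defined, else $\star$; $E(\omega(G))=\{\{u\!:\!(i,0),\mathrm{trg}^\star_G(u\!:\!i)\}\mid u\in V(G),i\in\pi\}$ where $\mathrm{trg}^\star_G(u\!:\!i)=v\!:\!(j,0)$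 if $\{u\!:\!i,v\!:\!j\}\in E(G)$ and $\mathrm{trg}^\star_G(u\!:\!i)=u\!:\!(i,1)$ if $u\!:\!i$ lies in no edge of $G$ (a loopback edge); $\delta(\omega(G))(\{u\!:\!(i,0),v\!:\!(j,0)\})=\delta(G)(\{u\!:\!i,v\!:\!j\})$ if defined and $\star$ otherwise, and $\delta(\omega(G))(\{u\!:\!(i,0),u\!:\!(i,1)\})=\star$. For a radius-$r$ disk $(H,v)\in\mathcal{D}^r_{\Sigma,\Delta,\pi}$, $\omega_r((H,v)):=\omega(H)^r_v$. *)

From mathcomp Require Import all_boot.
From mathcomp Require Import boolp classical_sets cardinality.

Set Implicit Arguments.
Unset Strict Implicit.
Unset Printing Implicit Defensive.

Local Open Scope classical_set_scope.

(* V = the vertex universe (\mathcal V),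
   S = Sigma (vertex labels), D = Delta (edge labels), P = pi (ports).
   A vertex-port  u:i  is the pair (u, i) : V * P.
   Partial labelings are option-valued functions; "undefined" = None. *)
Record graph (V S D P : Type) := Graph {
  verts : set V;
  edges : set (set (V * P));
  vlab  : V -> option S;
  elab  : set (V * P) -> option D
}.

Arguments Graph {V S D P}.

(* Conditions for being an element of G_{Sigma,Delta,pi}; partial functions
   are normalised to be None outside their domain, so that graph equality is
   plain (extensional) equality of the record. *)
Definition is_graph (V S D : Type) (P : finType) (G : graph V S D P) : Prop :=
  [/\ countable (verts G),
      (forall e, edges G e ->
         exists x y, [/\ x <> y, e = [set x; y], verts G x.1 & verts G y.1]),
      (forall e1 e2, edges G e1 -> edges G e2 -> e1 <> e2 -> e1 `&` e2 = set0),
      (forall u, vlab G u <> None -> verts G u) &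
      (forall e, elab G e <> None -> edges G e)].

Section Defs.
Variables (V S D : Type) (P : finType).
Implicit Types (G : graph V S D P).

Definition adj G (u w : V) : Prop :=
  exists i j, edges G [set (u, i); (w, j)].

Fixpoint reach G (c : V) (n : nat) (u : V) : Prop :=
  match n with
  | 0 => u = c /\ verts G c
  | n'.+1 => reach G c n' u \/ exists w, reach G c n' w /\ adj G w u
  end.

Definition ball G (c : V) (r : nat) : set V := [set u | verts G u /\ reach G c r u].

Definition disk_edges G (c : V) (r : nat) : set (set (V * P)) :=
  [set e | edges G e /\ exists x, e x /\ ball G c r x.1].

Definition disk G (c : V) (r : nat) : graph V S D P * V :=
  (Graph (ball G c r.+1)
         (disk_edges G c r)
         (fun u => if `[< ball G c r u >] then vlab G u else None)
         (fun e => if `[< disk_edges G c r e >] then elab G e else None),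
   c).

Definition trg G (u : V) (i : P) (t : V * (P * bool)) : Prop :=
  (exists v j, edges G [set (u, i); (v, j)] /\ t = (v, (j, false)))
  \/ ((forall e, edges G e -> ~ e (u, i)) /\ t = (u, (i, true))).

Definition omega_edges G : set (set (V * (P * bool))) :=
  [set e | exists u i t, [/\ verts G u, trg G u i t & e = [set (u, (i, false)); t]]].

Definition strip (e : set (V * (P * bool))) : set (V * P) :=
  [set x | e (x.1, (x.2, false))].

(* The encoding omega.  Sigma' = option S and Delta' = option D,
   with None playing the role of the new label "star";  pi' = pi * bool
   with false = 0 and true = 1. *)
Definition omega G : graph V (option S) (option D) (P * bool)%type :=
  Graph (verts G)
        (omega_edges G)
        (fun u => if `[< verts G u >] then Some (vlab G u) else None)
        (fun e => if `[< omega_edges G e >] then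
                    Some (if `[< edges G (strip e) >] then elab G (strip e) else None)
                  else None).

End Defs.

Definition omega_r (V S D : Type) (P : finType) (r : nat) (Hv : graph V S D P * V)
  : graph V (option S) (option D) (P * bool)%type * V :=
  disk (omega Hv.1) Hv.2 r.

From mathcomp Require Import all_boot.
From mathcomp Require Import boolp classical_sets cardinality.

(* The encoding only adds loopback edges, so it preserves adjacency up to
   loops and hence balls.  An edge of omega(K) at the port u:(i,0) is
   determined by the edges of K that contain u:i; so around the ball of
   radius r the edges of omega(G^r_v) and of omega(G) coincide, since G^r_v
   keeps every edge of G touching that ball.  The labels agree on the ball
   for the same reason. *)

Set Implicit Arguments.
Unset Strict Implicit.
Unset Printing Implicit Defensive.

Local Open Scope classical_set_scope.

Lemma set2_eq (T : Type) (a b c d : T) : [set a; b] = [set c; d] ->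
  (a = c /\ b = d) \/ (a = d /\ b = c).
Proof.
move=> E.
have : [set c; d] a by rewrite -E; left.
have : [set c; d] b by rewrite -E; right.
have : [set a; b] c by rewrite E; left.
have : [set a; b] d by rewrite E; right.
by move=> [] ? [] ? [] ? [] ?; subst; auto.
Qed.

Section Balls.
Variables (V S D : Type) (P : finType).
Implicit Types (K : graph V S D P) (c u w : V) (n : nat).

Definition edges_on_verts K :=
  forall e, edges K e -> exists x y, [/\ e = [set x; y], verts K x.1 & verts K y.1].

Lemma is_graph_edges_on_verts K : is_graph K -> edges_on_verts K.
Proof. by case=> _ pairs _ _ _ e /pairs [x [y [_ -> ? ?]]]; exists x, y. Qed.

Lemma edge_verts K e x : edges_on_verts K -> edges K e -> e x -> verts K x.1.
Proof. by move=> K_ok /K_ok [y [z [-> ? ?]]] [->|->]. Qed.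

Lemma adj_sym K w (x : V) : adj K w x -> adj K x w.
Proof. by case=> i [j E]; exists j, i; rewrite setUC. Qed.

Lemma adj_verts K w (x : V) : edges_on_verts K -> adj K w x -> verts K w /\ verts K x.
Proof.
move=> K_ok [i [j E]]; split.
- by apply: (edge_verts (x := (w, i)) K_ok E); left.
- by apply: (edge_verts (x := (x, j)) K_ok E); right.
Qed.

Lemma edge_adj K (x y : V * P) : edges K [set x; y] -> adj K x.1 y.1.
Proof. by case: x y => ? i [? j] E; exists i, j. Qed.

Lemma reach_mono K c n m u : n <= m -> reach K c n u -> reach K c m u.
Proof.
elim: m => [|m IH]; first by rewrite leqn0 => /eqP ->.
by rewrite leq_eqVlt => /orP [/eqP -> //|/IH R] /R; left.
Qed.

Lemma reach_verts K c n u : edges_on_verts K -> reach K c n u -> verts K u.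
Proof.
move=> K_ok; elim: n u => [|n IH] u /=; first by case=> ->.
by case=> [/IH //|[w [_ /(adj_verts K_ok) []]]].
Qed.

Lemma ball_subS K c n : ball K c n `<=` ball K c n.+1.
Proof. by move=> u [? R]; split=> //; left. Qed.

Lemma ball_adjS K c n u w : verts K w -> ball K c n u -> adj K u w -> ball K c n.+1 w.
Proof. by move=> vw [_ R] A; split=> //; right; exists u. Qed.

Lemma adj_omega K w (x : V) : adj (omega K) w x -> adj K w x \/ w = x.
Proof.
move=> [a [b [u [i [t [_ T]]]]]].
case: T => [[y [j [Ey ->]]]|[_ ->]] /(@set2_eq (V * (P * bool))%type)
  [[[-> _] [-> _]]|[[-> _] [-> _]]]; auto.
- by left; exists i, j.
- by left; apply: adj_sym; exists i, j.
Qed.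

Lemma omega_adj K w (x : V) : verts K w -> adj K w x -> adj (omega K) w x.
Proof.
move=> vw [i [j E]]; exists (i, false), (j, false), w, i, (x, (j, false)).
by split=> //; left; exists x, j.
Qed.

Lemma reach_omega K c n u : edges_on_verts K ->
  reach (omega K) c n u <-> reach K c n u.
Proof.
move=> K_ok; elim: n u => [//|n IH] u /=; split.
- case=> [/IH|[w [/IH R /adj_omega [A|<-]]]]; [by left|by right; exists w|by left].
- case=> [/IH|[w [R A]]]; first by left.
  right; exists w; split; first exact/IH.
  exact: omega_adj (reach_verts K_ok R) A.
Qed.

Lemma ball_omega K c n : edges_on_verts K -> ball (omega K) c n = ball K c n.
Proof.
by move=> K_ok; apply/seteqP; split=> u [? R]; split=> //; apply/(reach_omega _ _ _ K_ok).
Qed.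

Lemma disk_eq K1 K2 c r :
  ball K1 c r.+1 = ball K2 c r.+1 -> ball K1 c r = ball K2 c r ->
  disk_edges K1 c r = disk_edges K2 c r ->
  (forall u, ball K1 c r u -> vlab K1 u = vlab K2 u) ->
  (forall e, disk_edges K1 c r e -> elab K1 e = elab K2 e) ->
  disk K1 c r = disk K2 c r.
Proof.
move=> B1 B E L EL; rewrite /disk B1 -B -E; congr (Graph _ _ _ _, _).
- apply: funext => u; case: (pselect (ball K1 c r u)) => [b|nb].
  + by rewrite (asboolT b) L.
  + by rewrite (asboolF nb).
- apply: funext => e; case: (pselect (disk_edges K1 c r e)) => [d|nd].
  + by rewrite (asboolT d) EL.
  + by rewrite (asboolF nd).
Qed.

End Balls.

Section Locality.
Variables (V S D : Type) (P : finType) (K1 K2 : graph V S D P) (B : set V).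
Hypothesis edges_near : forall e, (exists x, e x /\ B x.1) -> (edges K1 e <-> edges K2 e).
Hypothesis B_verts2 : B `<=` verts K2.

Lemma trg_near u i t : B u -> trg K1 u i t -> trg K2 u i t.
Proof.
move=> Bu [[w [j [E ->]]]|[N ->]].
- left; exists w, j; split=> //; apply/edges_near => //.
  by exists (u, i); split=> //; left.
- right; split=> // e E eu; apply: (N e) => //; apply/edges_near => //.
  by exists (u, i).
Qed.

Lemma omega_edges_near e x : e x -> B x.1 -> omega_edges K1 e -> omega_edges K2 e.
Proof.
move=> ex Bx [u [i [t [_ T Ee]]]]; subst e.
case: ex => [xu|xt].
  rewrite {}xu /= in Bx.
  by exists u, i, t; split=> //; [exact: B_verts2|exact: trg_near].
case: T => [[w [j [Ew tw]]]|[N tl]]; subst t; rewrite {}xt /= in Bx.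
- exists w, j, (u, (i, false)); split; first exact: B_verts2.
  + left; exists u, i; split=> //; rewrite setUC; apply/edges_near => //.
    by exists (w, j); split=> //; right.
  + by rewrite setUC.
- exists u, i, (u, (i, true)); split=> //; first exact: B_verts2.
  by apply: trg_near => //; right.
Qed.

End Locality.

Lemma omega_edge_strip_near (V S D : Type) (P : finType) (K : graph V S D P) (B : set V) e x :
  omega_edges K e -> e x -> B x.1 -> exists y, strip e y /\ B y.1.
Proof.
move=> [u [i [t [_ T ->]]]] [->|->] Bx; first by exists (u, i); split=> //; left.
case: T => [[w [j [_ tw]]]|[_ tl]]; subst t.
- by exists (w, j); split=> //; right.
- by exists (u, i); split=> //; left.
Qed.

Lemma omega_edges_nearE (V S D : Type) (P : finType) (K1 K2 : graph V S D P) (B : set V) e x :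
  (forall f, (exists y, f y /\ B y.1) -> (edges K1 f <-> edges K2 f)) ->
  B `<=` verts K1 -> B `<=` verts K2 -> e x -> B x.1 ->
  omega_edges K1 e <-> omega_edges K2 e.
Proof.
move=> near B1 B2 ex Bx; split; first exact: (omega_edges_near near B2 ex Bx).
by apply: (omega_edges_near _ B1 ex Bx) => f /near; apply: iff_sym.
Qed.

Section Disk.
Variables (V S D : Type) (P : finType) (G : graph V S D P) (v : V) (r : nat).
Hypothesis G_ok : edges_on_verts G.

Local Notation H := (disk G v r).1.

Lemma disk_edges_on_verts : edges_on_verts H.
Proof.
move=> e [eG [z [ez Bz]]]; have [x [y [Exy vx vy]]] := G_ok eG.
have A : adj G x.1 y.1 by apply: edge_adj; rewrite -Exy.
exists x, y; move: ez Bz; rewrite Exy => -[|] -> Bz.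
- by split=> //; [exact: ball_subS Bz|exact: ball_adjS Bz A].
- by split=> //; [exact: ball_adjS Bz (adj_sym A)|exact: ball_subS Bz].
Qed.

Lemma reach_disk n u : n <= r.+1 -> reach H v n u <-> reach G v n u.
Proof.
elim: n u => [|n IH] u lt /=.
  split; case=> -> Bv; split=> //; first by case: Bv.
  by split=> //; apply: (reach_mono (n := 0)).
have {}IH := IH _ (ltnW lt); rewrite ltnS in lt; split.
- case=> [/IH|[w [/IH R [i [j [E _]]]]]]; first by left.
  by right; exists w; split=> //; exists i, j.
- case=> [/IH|[w [R [i [j E]]]]]; first by left.
  right; exists w; split; first exact/IH.
  exists i, j; split=> //; exists (w, i); split; first by left.
  by split; [exact: reach_verts G_ok R|exact: reach_mono lt R].
Qed.

Lemma ball_omega_disk n : n <= r.+1 -> ball (omega H) v n = ball G v n.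
Proof.
move=> lt; rewrite ball_omega; last exact: disk_edges_on_verts.
apply/seteqP; split=> u /= [Bu R].
- by split; [case: Bu|exact/(reach_disk _ lt)].
- by split; [split=> //; exact: reach_mono lt R|exact/(reach_disk _ lt)].
Qed.

Lemma disk_edges_near e : (exists x, e x /\ ball G v r x.1) -> (edges H e <-> edges G e).
Proof. by move=> near; split=> [[]|] // ?; split. Qed.

Lemma omega_edges_disk e x : e x -> ball G v r x.1 -> omega_edges H e <-> omega_edges G e.
Proof.
move=> ex Bx; apply: (omega_edges_nearE _ _ _ ex Bx).
- exact: disk_edges_near.
- exact: ball_subS.
- by move=> u [].
Qed.

Lemma disk_edges_omega_disk : disk_edges (omega H) v r = disk_edges (omega G) v r.
Proof.
rewrite /disk_edges ball_omega_disk // ball_omega //.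
apply/seteqP; split=> e [E [x [ex Bx]]]; (split; last by exists x).
- exact: (omega_edges_disk ex Bx).1 E.
- exact: (omega_edges_disk ex Bx).2 E.
Qed.

Lemma vlab_omega_disk u : ball G v r u -> vlab (omega H) u = vlab (omega G) u.
Proof. by move=> Bu; rewrite /= (asboolT (ball_subS Bu)) (asboolT Bu.1) (asboolT Bu). Qed.

Lemma elab_omega_disk e : disk_edges (omega G) v r e -> elab (omega H) e = elab (omega G) e.
Proof.
case=> oG [x [ex Bx]]; rewrite ball_omega // in Bx.
have oH := (omega_edges_disk ex Bx).2 oG.
have near := omega_edge_strip_near oG ex Bx.
rewrite /= (asboolT oH) (asboolT oG); congr Some.
case: (pselect (edges G (strip e))) => [g|ng].
- have d : disk_edges G v r (strip e) by split.
  by rewrite !(asboolT d) (asboolT g).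
- have nd : ~ disk_edges G v r (strip e) by case.
  by rewrite (asboolF nd) (asboolF ng).
Qed.

Lemma omega_disk : disk (omega H) v r = disk (omega G) v r.
Proof.
apply: disk_eq; rewrite ?ball_omega_disk ?ball_omega //.
- exact: disk_edges_omega_disk.
- exact: vlab_omega_disk.
- by move=> e; rewrite disk_edges_omega_disk; exact: elab_omega_disk.
Qed.

End Disk.

Theorem proposition3p1 (V S D : Type) (P : finType)
  (V_uncountable : ~ countable [set: V])
  (r : nat) (G : graph V S D P) (v : V) :
  is_graph G -> verts G v ->
  omega_r r (disk G v r) = disk (omega G) v r.
Proof. by move=> /is_graph_edges_on_verts G_ok _; exact: omega_disk. Qed.
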